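(* Let $(X,f)$ be an $(\mathsf{F},\mathsf{B})$-dialgebra, let $\mathcal{R}_{(X,f)}$ be a category as described in the context, and let $\Phi,\Psi:\mathcal{R}_{(X,f)}\to\mathbf{Set}$ be functors such that $\Phi$ sends every arrow of $\mathcal{R}_{(X,f)}$ to a surjective function. Then the assignment $\delta\mapsto\delta_{\mathit{id}_{(X,f)}}$ is a bijection between natural transformations $\delta:\Phi\Rightarrow\Psi$ and invariants from $\Phi$ to $\Psi$ (with respect to $(X,f)$ and $\mathcal{R}_{(X,f)}$). That is: for every natural transformation $\delta$, the component $\delta_{\mathit{id}_{(X,f)}}$ is an invariant and determines $\delta$ uniquely; and for every invariant $k$ there is a unique natural transformation $\delta$ with $\delta_{\mathit{id}_{(X,f)}}=k$.
   Context: For functors $\mathsf{F},\mathsf{B}:\mathbf{Set}\to\mathbf{Set}$, an $(\mathsf{F},\mathsf{B})$-dialgebra is a pair $(X,f)$ with $X$ a set and $f:\mathsf{F}X\to\mathsf{B}X$ a function; a homomorphism $h:(X,f)\to(Y,g)$ is a function $h:X\to Y$ with $g\circ\mathsf{F}h=\mathsf{B}h\circ f$; these form $\mathit{Dialg}(\mathsf{F},\mathsf{B})$. Let $\mathcal{E}$ be the subcategory of epimorphisms of $\mathit{Dialg}(\mathsf{F},\mathsf{B})$ and $(X,f)/\mathcal{E}$ the coslice: objects are epimorphisms $h:(X,f)\to(Y,g)$ of $\mathit{Dialg}(\mathsf{F},\mathsf{B})$, and arrows from $h:(X,f)\to(Y,g)$ to $h':(X,f)\to(Y',g')$ are epimorphisms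 $k:(Y,g)\to(Y',g')$ with $k\circ h=h'$. $\mathcal{R}_{(X,f)}$ is any full subcategory of $(X,f)/\mathcal{E}$ such that (1) for every object $h$ of $(X,f)/\mathcal{E}$ there exist an object $h'$ of $\mathcal{R}_{(X,f)}$ and an arrow $h\to h'$ in $(X,f)/\mathcal{E}$, and (2) $\mathit{id}_{(X,f)}$ is an object. For each object $h$ of $\mathcal{R}_{(X,f)}$, $\hat h:\mathit{id}_{(X,f)}\to h$ denotes the arrow given by $h$ itself. Given functors $\Phi,\Psi:\mathcal{R}_{(X,f)}\to\mathbf{Set}$, a function $k:\Phi(\mathit{id}_{(X,f)})\to\Psi(\mathit{id}_{(X,f)})$ is an invariant (bisimulation invariant with respect to $(X,f)$ and $\mathcal{R}_{(X,f)}$) from $\Phi$ to $\Psi$ iff for all $x_1,x_2\in\Phi(\mathit{id}_{(X,f)})$ and every object $h$ of $\mathcal{R}_{(X,f)}$, $\Phi\hat h(x_1)=\Phi\hat h(x_2)$ implies $\Psi\hat h(k(x_1))=\Psi\hat h(k(x_2))$. *)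

Set Implicit Arguments.
Unset Strict Implicit.

(* Endofunctors of Set (Set modelled by Type; function equality pointwise). *)
Record SetFunctor := {
  fobj :> Type -> Type;
  fmap : forall A C : Type, (A -> C) -> fobj A -> fobj C;
  fmap_id : forall (A : Type) (x : fobj A), fmap (fun a : A => a) x = x;
  fmap_comp : forall (A C D : Type) (g : C -> D) (h : A -> C) (x : fobj A),
      fmap (fun a => g (h a)) x = fmap g (fmap h x)
}.
Arguments fmap s [A C] _ _.

Record dialg (F B : SetFunctor) := Dialg {
  carrier : Type;
  str : F carrier -> B carrier
}.
Arguments carrier [F B] _.
Arguments str [F B] _ _.

Definition is_hom (F B : SetFunctor) (A C : dialg F B)
  (h : carrier A -> carrier C) : Prop :=
  forall x : F (carrier A), str C (fmap F h x) = fmap B h (str A x).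
Arguments is_hom [F B] A C h.

Definition is_epi (F B : SetFunctor) (A C : dialg F B)
  (h : carrier A -> carrier C) : Prop :=
  is_hom A C h /\
  forall (D : dialg F B) (u v : carrier C -> carrier D),
    is_hom C D u -> is_hom C D v ->
    (forall x, u (h x) = v (h x)) -> forall y, u y = v y.
Arguments is_epi [F B] A C h.

Lemma is_epi_id (F B : SetFunctor) (A : dialg F B) :
  is_epi A A (fun a => a).
Proof.
  split.
  - intros x. unfold is_hom. rewrite (@fmap_id F _ x), (@fmap_id B _ (str A x)). reflexivity.
  - intros D u v _ _ H y. apply H.
Qed.

Lemma is_epi_comp (F B : SetFunctor) (A C D : dialg F B)
  (h : carrier A -> carrier C) (k : carrier C -> carrier D) :
  is_epi A C h -> is_epi C D k -> is_epi A D (fun a => k (h a)).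
Proof.
  intros [Hh Eh] [Hk Ek]. split.
  - intros x. unfold is_hom in *.
    rewrite (@fmap_comp F _ _ _ k h x), (@fmap_comp B _ _ _ k h (str A x)).
    rewrite Hk. f_equal. apply Hh.
  - intros E u v Hu Hv Huv. apply (Ek E u v Hu Hv).
    assert (Hu' : is_hom C E (fun c => u (k c))).
    { intros x. unfold is_hom in *.
      rewrite (@fmap_comp F _ _ _ u k x), (@fmap_comp B _ _ _ u k (str C x)).
      rewrite Hu. f_equal. apply Hk. }
    assert (Hv' : is_hom C E (fun c => v (k c))).
    { intros x. unfold is_hom in *.
      rewrite (@fmap_comp F _ _ _ v k x), (@fmap_comp B _ _ _ v k (str C x)).
      rewrite Hv. f_equal. apply Hk. }
    exact (Eh E _ _ Hu' Hv' Huv).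
Qed.

(* Objects of the coslice (X,f)/E : epimorphisms out of X *)
Record cobj (F B : SetFunctor) (X : dialg F B) := Cobj {
  cod : dialg F B;
  cmap : carrier X -> carrier cod;
  cmap_epi : is_epi X cod cmap
}.
Arguments cod [F B X] _.
Arguments cmap [F B X] _ _.
Arguments cmap_epi [F B X] _.

Record carr (F B : SetFunctor) (X : dialg F B) (o o' : cobj X) := Carr {
  amap : carrier (cod o) -> carrier (cod o');
  amap_epi : is_epi (cod o) (cod o') amap;
  amap_comm : forall x, amap (cmap o x) = cmap o' x
}.
Arguments amap [F B X o o'] _ _.

Definition idobj (F B : SetFunctor) (X : dialg F B) : cobj X :=
  Cobj (is_epi_id X).

Definition carr_id (F B : SetFunctor) (X : dialg F B) (o : cobj X) : carr o o :=
  @Carr F B X o o (fun y => y) (is_epi_id (cod o)) (fun x => eq_refl).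

Definition carr_comp (F B : SetFunctor) (X : dialg F B) (o o' o'' : cobj X)
  (b : carr o' o'') (a : carr o o') : carr o o''.
Proof.
  refine (@Carr F B X o o'' (fun y => amap b (amap a y))
            (is_epi_comp (amap_epi a) (amap_epi b)) _).
  intros x. rewrite (amap_comm a). apply (amap_comm b).
Defined.

Definition hat (F B : SetFunctor) (X : dialg F B) (o : cobj X) :
  carr (idobj X) o :=
  @Carr F B X (idobj X) o (cmap o) (cmap_epi o) (fun x => eq_refl).

Unset Implicit Arguments.
(* Functors from the full subcategory R (objects: o with P o) to Set *)
Record RFunctor (F B : SetFunctor) (X : dialg F B) (P : cobj X -> Prop) := {
  Fo : forall o : cobj X, P o -> Type;
  Fa : forall (o : cobj X) (p : P o) (o' : cobj X) (p' : P o'),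
         carr o o' -> Fo o p -> Fo o' p';
  Fa_id : forall (o : cobj X) (p : P o) (x : Fo o p),
         Fa o p o p (carr_id o) x = x;
  Fa_comp : forall (o o' o'' : cobj X) (p : P o) (p' : P o') (p'' : P o'')
         (a : carr o o') (b : carr o' o'') (x : Fo o p),
         Fa o p o'' p'' (carr_comp b a) x = Fa o' p' o'' p'' b (Fa o p o' p' a x)
}.
Set Implicit Arguments.
Arguments Fo [F B X P] _ [o] _.
Arguments Fa [F B X P] _ [o] p [o'] p' _ _.

Definition is_nat (F B : SetFunctor) (X : dialg F B) (P : cobj X -> Prop)
  (Phi Psi : RFunctor F B X P) (d : forall o (p : P o), Fo Phi p -> Fo Psi p) : Prop :=
  forall (o o' : cobj X) (p : P o) (p' : P o') (a : carr o o') (x : Fo Phi p),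
    Fa Psi p p' a (d o p x) = d o' p' (Fa Phi p p' a x).

Definition invariant (F B : SetFunctor) (X : dialg F B) (P : cobj X -> Prop)
  (Phi Psi : RFunctor F B X P) (pid : P (idobj X))
  (k : Fo Phi pid -> Fo Psi pid) : Prop :=
  forall (x1 x2 : Fo Phi pid) (o : cobj X) (p : P o),
    Fa Phi pid p (hat o) x1 = Fa Phi pid p (hat o) x2 ->
    Fa Psi pid p (hat o) (k x1) = Fa Psi pid p (hat o) (k x2).
Arguments invariant [F B X P] Phi Psi pid k.
Arguments is_nat [F B X P] Phi Psi d.


From Stdlib Require Import FunctionalExtensionality ProofIrrelevance ClassicalEpsilon.

Set Implicit Arguments.

(* The key observation is that id_(X,f) is initial in the coslice: for every
   object o the arrow  hat o : id -> o  is the unique one, so  a o hat o = hat o'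
   for any arrow a : o -> o'.  Consequently, for any functor G on R,
   G(a) o G(hat o) = G(hat o'), and every natural transformation d satisfies
   d_o o Phi(hat o) = Psi(hat o) o d_id.  From this:
   - d_id is an invariant (apply Psi(hat o) to an equality Phi(hat o) x1 = Phi(hat o) x2);
   - if every Phi(hat o) is surjective, d is determined by d_id;
   - conversely an invariant k extends to  d_o(y) := Psi(hat o)(k x)  for any x with
     Phi(hat o) x = y; invariance makes this independent of the chosen x, which gives
     naturality, and d_id = k since hat id is the identity arrow.
   The theorem is the conjunction of these three facts; surjectivity of Phi(hat o)
   is the special case a := hat o of the surjectivity hypothesis, and the
   cofinality of R in the coslice is not needed for this result. *)

Lemma carr_ext (F B : SetFunctor) (X : dialg F B) (o o' : cobj X) (a b : carr o o') :
  (forall y, amap a y = amap b y) -> a = b.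
Proof.
  destruct a as [fa ea ca], b as [fb eb cb]; simpl; intro H.
  apply functional_extensionality in H; subst fb.
  assert (ea = eb) by apply proof_irrelevance; subst eb.
  assert (ca = cb) by apply proof_irrelevance; subst cb.
  reflexivity.
Qed.

Lemma comp_hat (F B : SetFunctor) (X : dialg F B) (o o' : cobj X) (a : carr o o') :
  carr_comp a (hat o) = hat o'.
Proof.
  apply carr_ext; intro x; simpl. apply (amap_comm a).
Qed.

Lemma hat_idobj (F B : SetFunctor) (X : dialg F B) :
  hat (idobj X) = carr_id (idobj X).
Proof.
  apply carr_ext; reflexivity.
Qed.

Section NaturalVersusInvariant.

Variables (F B : SetFunctor) (X : dialg F B) (P : cobj X -> Prop).
Hypothesis Hid : P (idobj X).
Variables Phi Psi : RFunctor F B X P.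

Lemma Fa_hat (G : RFunctor F B X P) (o o' : cobj X) (p : P o) (p' : P o')
  (a : carr o o') (x : Fo G Hid) :
  Fa G p p' a (Fa G Hid p (hat o) x) = Fa G Hid p' (hat o') x.
Proof.
  rewrite <- Fa_comp, comp_hat. reflexivity.
Qed.

Lemma nat_component_invariant (d : forall o (p : P o), Fo Phi p -> Fo Psi p) :
  is_nat Phi Psi d -> invariant Phi Psi Hid (d (idobj X) Hid).
Proof.
  intros Hd x1 x2 o p Hx. rewrite !Hd, Hx. reflexivity.
Qed.

Hypothesis Phi_hat_surj :
  forall (o : cobj X) (p : P o) (y : Fo Phi p), exists x, Fa Phi Hid p (hat o) x = y.

Lemma nat_determined_by_id (d1 d2 : forall o (p : P o), Fo Phi p -> Fo Psi p) :
  is_nat Phi Psi d1 -> is_nat Phi Psi d2 ->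
  (forall x, d1 (idobj X) Hid x = d2 (idobj X) Hid x) ->
  forall o (p : P o) x, d1 o p x = d2 o p x.
Proof.
  intros Hd1 Hd2 Hagree o p y.
  destruct (Phi_hat_surj p y) as [x <-].
  rewrite <- Hd1, <- Hd2, Hagree. reflexivity.
Qed.

Definition lift (o : cobj X) (p : P o) (y : Fo Phi p) : Fo Phi Hid :=
  proj1_sig (constructive_indefinite_description _ (Phi_hat_surj p y)).

Lemma lift_spec (o : cobj X) (p : P o) (y : Fo Phi p) :
  Fa Phi Hid p (hat o) (lift p y) = y.
Proof.
  unfold lift. destruct (constructive_indefinite_description _ _) as [x Hx]. exact Hx.
Qed.

Variable k : Fo Phi Hid -> Fo Psi Hid.
Hypothesis k_invariant : invariant Phi Psi Hid k.

Definition extend (o : cobj X) (p : P o) (y : Fo Phi p) : Fo Psi p :=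
  Fa Psi Hid p (hat o) (k (lift p y)).

(* Invariance makes extend independent of the chosen preimage. *)
Lemma extend_spec (o : cobj X) (p : P o) (x : Fo Phi Hid) :
  extend p (Fa Phi Hid p (hat o) x) = Fa Psi Hid p (hat o) (k x).
Proof.
  apply k_invariant. apply lift_spec.
Qed.

(* extend is natural: both sides reduce to Psi(hat o') (k x) for a preimage x of y. *)
Lemma extend_nat : is_nat Phi Psi extend.
Proof.
  intros o o' p p' a y.
  rewrite <- (lift_spec p y) at 2.
  unfold extend at 1. rewrite Fa_hat, Fa_hat, extend_spec. reflexivity.
Qed.

(* extend has identity component k, as hat id_(X,f) is the identity arrow. *)
Lemma extend_id (x : Fo Phi Hid) : extend Hid x = k x.
Proof.
  assert (Hx : Fa Phi Hid Hid (hat (idobj X)) x = x) by (rewrite hat_idobj; apply Fa_id).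
  rewrite <- Hx at 1. rewrite extend_spec, hat_idobj, Fa_id. reflexivity.
Qed.

End NaturalVersusInvariant.

Theorem theorem3 (F B : SetFunctor) (X : dialg F B) (P : cobj X -> Prop)
  (Hcofinal : forall o : cobj X, exists o' : cobj X, P o' /\ inhabited (carr o o'))
  (Hid : P (idobj X))
  (Phi Psi : RFunctor F B X P)
  (Hsurj : forall (o o' : cobj X) (p : P o) (p' : P o') (a : carr o o')
             (y : Fo Phi p'), exists x : Fo Phi p, Fa Phi p p' a x = y) :
  (forall d : forall o (p : P o), Fo Phi p -> Fo Psi p,
      is_nat Phi Psi d -> invariant Phi Psi Hid (d (idobj X) Hid))
  /\
  (forall d1 d2 : forall o (p : P o), Fo Phi p -> Fo Psi p,
      is_nat Phi Psi d1 -> is_nat Phi Psi d2 ->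
      (forall x, d1 (idobj X) Hid x = d2 (idobj X) Hid x) ->
      forall o (p : P o) x, d1 o p x = d2 o p x)
  /\
  (forall k : Fo Phi Hid -> Fo Psi Hid,
      invariant Phi Psi Hid k ->
      exists d : forall o (p : P o), Fo Phi p -> Fo Psi p,
        is_nat Phi Psi d /\ (forall x, d (idobj X) Hid x = k x) /\
        (forall d' : forall o (p : P o), Fo Phi p -> Fo Psi p,
           is_nat Phi Psi d' -> (forall x, d' (idobj X) Hid x = k x) ->
           forall o (p : P o) x, d' o p x = d o p x)).
Proof.
  pose proof (fun o (p : P o) => Hsurj _ _ Hid p (hat o)) as Phi_hat_surj.
  split; [intros d Hd; exact (nat_component_invariant Hid Hd)|].
  split.
  { intros d1 d2 Hd1 Hd2. exact (nat_determined_by_id Hid Phi_hat_surj Hd1 Hd2). }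
  intros k Hk.
  pose proof (extend_nat Phi_hat_surj Hk) as Hext_nat.
  pose proof (extend_id Phi_hat_surj Hk) as Hext_id.
  exists (extend Hid Phi Psi Phi_hat_surj k).
  split; [exact Hext_nat|split; [exact Hext_id|]].
  intros d' Hd' Hd'k.
  apply (nat_determined_by_id Hid Phi_hat_surj Hd' Hext_nat).
  intro x. rewrite Hd'k, Hext_id. reflexivity.
Qed.
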